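(* Let $G$ be a finite group, $A\subset G$, $K>0$, $l$ a positive integer with $\mathbb{P}_G(A^l)\le K\,\mathbb{P}_G(A^{l-1})$, and $\epsilon\in(0,1]$. Then $$AA^{-1}\subset\operatorname{LinBohr}(\operatorname{LSpec}(A^l,\epsilon),2\epsilon\sqrt{2K}).$$
   Context: $A^l$ is the $l$-fold product set ($A^0:=\{1_G\}$), $AA^{-1}=\{ab^{-1}:a,b\in A\}$, $\mathbb{P}_G(E)=|E|/|G|$. $\operatorname{Lin}(G)$ is the set of homomorphisms $G\to S^1$; for $B\subset G$, $\widehat{1_B}(\gamma):=\mathbb{E}_{x\in G}1_B(x)\gamma(x)$ and $\operatorname{LSpec}(B,\eta):=\{\gamma\in\operatorname{Lin}(G):|\widehat{1_B}(\gamma)|\ge\sqrt{1-\eta^2/2}\,\mathbb{P}_G(B)\}$. For $z\in S^1$, $\|z\|:=(2\pi)^{-1}|\operatorname{Arg}z|$ with $\operatorname{Arg}z\in(-\pi,\pi]$, and $\operatorname{LinBohr}(\Lambda,\delta):=\{x\in G:\|\gamma(x)\|\le\delta\ \forall\gamma\in\Lambda\}$. *)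

From HB Require Import structures.
From mathcomp Require Import all_boot all_order all_fingroup all_algebra.
From mathcomp Require Import reals trigo.
From mathcomp Require Import complex.
Set Implicit Arguments. Unset Strict Implicit. Unset Printing Implicit Defensive.
Import Order.TTheory GRing.Theory Num.Theory.
Local Open Scope ring_scope.

Section Defs.
Variable R : realType.
Variable gT : finGroupType.

Definition Arg (z : R[i]) : R :=
  if 0 <= complex.Im z then acos (complex.Re z / ComplexField.Normc.normc z)
  else - acos (complex.Re z / ComplexField.Normc.normc z).

Definition circ_norm (z : R[i]) : R := `|Arg z| / (2 * pi).

Definition is_Lin (g : gT -> R[i]) : Prop :=
  (forall x y : gT, g (x * y)%g = g x * g y) /\ (forall x, ComplexField.Normc.normc (g x) = 1).

Definition PG (E : {set gT}) : R := #|E|%:R / #|[set: gT]|%:R.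

Definition hat1 (B : {set gT}) (g : gT -> R[i]) : R[i] :=
  (#|[set: gT]|%:R)^-1 * \sum_(x : gT) (if x \in B then g x else 0).

Definition LSpec (B : {set gT}) (eta : R) (g : gT -> R[i]) : Prop :=
  is_Lin g /\ Num.sqrt (1 - eta ^+ 2 / 2) * PG B <= ComplexField.Normc.normc (hat1 B g).

Definition LinBohr (Lam : (gT -> R[i]) -> Prop) (delta : R) (x : gT) : Prop :=
  forall g, Lam g -> circ_norm (g x) <= delta.
End Defs.

(* Write B = A^l = A * A^(l-1) and let mu be the mean of a character g over B. The
   spectral hypothesis says |mu| >= sqrt(1 - eps^2/2), so the variance
   sum_(y in B) |g y - mu|^2 = |B| (1 - |mu|^2) is at most |B| eps^2 / 2. For a, b in A
   and y in A^(l-1) we have |g a - g b| = |g (a y) - g (b y)| with a y, b y in B, so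
   summing over y bounds |A^(l-1)| |g a - g b|^2 by four times the variance; the doubling
   hypothesis then gives |g (a b^-1) - 1| = |g a - g b| <= eps sqrt(2K). Finally
   ||z|| <= |z - 1| / 2 on the unit circle, which reduces to sin s >= s / pi on
   [0, pi/2]. *)

From HB Require Import structures.
From mathcomp Require Import all_boot all_order all_fingroup all_algebra.
From mathcomp Require Import reals normedtype trigo derive complex.
From mathcomp Require Import ring lra.
Import Order.TTheory GRing.Theory Num.Theory.
Import numFieldNormedType.Exports.
Set Implicit Arguments. Unset Strict Implicit. Unset Printing Implicit Defensive.
Local Open Scope ring_scope.

Section Trigonometry.
Variable R : realType.

Lemma mul_cos_le_sin (s : R) : 0 <= s <= pi -> s * cos s <= sin s.
Proof.
move=> /andP[s0 spi]; have [->|s_neq0] := eqVneq s 0; first by rewrite sin0 mul0r.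
have s_gt0 : 0 < s by rewrite lt_def s_neq0 s0.
have [|c /[!in_itv] /= /andP[c0 cs]] := MVT s_gt0 (fun y _ => is_derive_sin y).
  by apply: derivable_within_continuous => y _; exact: derivable_sin.
rewrite sin0 !subr0 => ->; rewrite mulrC ler_pM2r //.
have c_in : c \in `[0, pi] by rewrite in_itv /= ltW //= (le_trans (ltW cs)).
have s_in : s \in `[0, pi] by rewrite in_itv /= s0.
by rewrite leNgt ltr_cos // -leNgt ltW.
Qed.

Lemma sin_ge_divpi (s : R) : 0 <= s <= pi / 2 -> s / pi <= sin s.
Proof.
move=> /andP[s0 spi2]; have pi2 := @pi_ge2 R.
have pi_gt0 : 0 < pi :> R by lra.
have invpi : pi^-1 <= 2^-1 :> R by rewrite lef_pV2 ?posrE //; lra.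
(* Either cos s >= 1/pi and sin s >= s cos s >= s/pi, or cos s < 1/pi <= 1/2 and
   then sin s > 1/2 >= s/pi. *)
have [cos_ge|cos_lt] := leP pi^-1 (cos s).
  apply: (le_trans (ler_wpM2l s0 cos_ge)); apply: mul_cos_le_sin.
  by rewrite s0 /=; lra.
have cos0 : 0 <= cos s by apply: cos_ge0_pihalf; rewrite spi2 andbT; lra.
have sin0 : 0 <= sin s by apply: sin_ge0_pi; rewrite s0 /=; lra.
have sin_sqr := sin2cos2 s.
have : s / pi <= 2^-1 by rewrite ler_pdivrMr //; lra.
nra.
Qed.

Lemma sqr_divpi_le_one_sub_cos (t : R) : 0 <= t <= pi -> (t / pi) ^+ 2 <= 2 * (1 - cos t).
Proof.
move=> /andP[t0 tpi]; have pi2 := @pi_ge2 R.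
have divpi0 : 0 <= t / 2 / pi by rewrite !divr_ge0 //; lra.
have -> : t / pi = 2 * (t / 2 / pi) by field; lra.
have -> : cos t = 1 - 2 * sin (t / 2) ^+ 2.
  by rewrite {1}(splitr t) -mulr2n cos_mulr2n cos2sin2 mulr2n; ring.
suff : t / 2 / pi <= sin (t / 2) by nra.
by apply: sin_ge_divpi; lra.
Qed.
End Trigonometry.

Section ComplexPlane.
Variable R : realType.
Local Notation normc := (@ComplexField.Normc.normc R).
Local Notation Re := (@complex.Re R).
Local Notation Im := (@complex.Im R).

Lemma sqr_normc_ReIm (z : R[i]) : normc z ^+ 2 = Re z ^+ 2 + Im z ^+ 2.
Proof. by case: z => a b; rewrite /= sqr_sqrtr // addr_ge0 ?sqr_ge0. Qed.

Lemma normc_ge0 (z : R[i]) : 0 <= normc z.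
Proof. by case: z => a b; exact: sqrtr_ge0. Qed.

Lemma sqr_normc_sub1 (z : R[i]) : normc z = 1 -> normc (z - 1) ^+ 2 = 2 * (1 - Re z).
Proof.
move=> z1; have := sqr_normc_ReIm z; rewrite z1 sqr_normc_ReIm !raddfB /=.
by case: z {z1} => a b /=; lra.
Qed.

Lemma sqr_normc_sub_le (z w m : R[i]) :
  normc (z - w) ^+ 2 <= 2 * (normc (z - m) ^+ 2 + normc (w - m) ^+ 2).
Proof.
rewrite !sqr_normc_ReIm !raddfB /=.
case: z w m => [a b] [c d] [e f] /=.
have := sqr_ge0 (a + c - 2 * e); have := sqr_ge0 (b + d - 2 * f); nra.
Qed.

Lemma circ_norm_le (z : R[i]) : normc z = 1 -> circ_norm z <= normc (z - 1) / 2.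
Proof.
move=> z1; have pi_gt0 := @pi_gt0 R.
have Re_bound : -1 <= Re z <= 1.
  by have := sqr_normc_ReIm z; rewrite z1; case: z {z1} => a b /= ?; apply/andP; split; nra.
have circ_acos : circ_norm z = acos (Re z) / (2 * pi).
  rewrite /circ_norm /Arg z1 divr1.
  by case: ifP => _; rewrite ?normrN ger0_norm // acos_ge0.
have [t0 tpi] := (acos_ge0 Re_bound, acos_lepi Re_bound).
have := sqr_divpi_le_one_sub_cos (t := acos (Re z)); rewrite t0 tpi acosK ?in_itv //.
move=> /(_ isT); rewrite -sqr_normc_sub1 // => bound.
have pi_ge0 : 0 <= pi :> R by exact: ltW.
rewrite circ_acos -ler_sqr ?nnegrE ?divr_ge0 ?mulr_ge0 ?normc_ge0 //.
have -> : acos (Re z) / (2 * pi) = acos (Re z) / pi / 2 by field; lra.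
by rewrite !expr_div_n; lra.
Qed.
End ComplexPlane.

Section Mean.
Variables (R : realType) (I : finType).
Local Notation normc := (@ComplexField.Normc.normc R).
Local Notation Re := (@complex.Re R).
Local Notation Im := (@complex.Im R).

Definition mean (B : {pred I}) (z : I -> R[i]) : R[i] := (\sum_(y in B) z y) / #|B|%:R.

Lemma Re_divrn (w : R[i]) (n : nat) : Re (w / n%:R) = Re w / n%:R.
Proof.
rewrite -(rmorph_nat (real_complex R)) -fmorphV.
by case: w => a b /=; rewrite mulr0 subr0.
Qed.

Lemma Im_divrn (w : R[i]) (n : nat) : Im (w / n%:R) = Im w / n%:R.
Proof.
rewrite -(rmorph_nat (real_complex R)) -fmorphV.
by case: w => a b /=; rewrite mulr0 add0r.
Qed.

Lemma sumr_sqr_sub (B : {pred I}) (u : I -> R) (m : R) :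
  \sum_(y in B) (u y - m) ^+ 2 =
  \sum_(y in B) u y ^+ 2 - 2 * m * \sum_(y in B) u y + #|B|%:R * m ^+ 2.
Proof.
rewrite (eq_bigr (fun y => u y ^+ 2 - 2 * m * u y + m ^+ 2)) => [|y _]; last first.
  by rewrite sqrrB; ring.
by rewrite !big_split /= sumrN sumr_const -mulr_sumr -[m ^+ 2 *+ _]mulr_natl.
Qed.

Lemma sum_sqr_normc_sub_mean (B : {pred I}) (z : I -> R[i]) : (0 < #|B|)%N ->
  \sum_(y in B) normc (z y - mean B z) ^+ 2 =
  \sum_(y in B) normc (z y) ^+ 2 - #|B|%:R * normc (mean B z) ^+ 2.
Proof.
move=> B_gt0; have N_gt0 : 0 < #|B|%:R :> R by rewrite ltr0n.
have sum_Re : \sum_(y in B) Re (z y) = #|B|%:R * Re (mean B z).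
  by rewrite Re_divrn raddf_sum mulrC divfK ?gt_eqF.
have sum_Im : \sum_(y in B) Im (z y) = #|B|%:R * Im (mean B z).
  by rewrite Im_divrn raddf_sum mulrC divfK ?gt_eqF.
under eq_bigr => y _ do rewrite sqr_normc_ReIm !raddfB /=.
under [in RHS]eq_bigr => y _ do rewrite sqr_normc_ReIm.
rewrite !big_split /= !sumr_sqr_sub sum_Re sum_Im sqr_normc_ReIm; ring.
Qed.
End Mean.

Section Characters.
Variables (R : realType) (gT : finGroupType).
Local Notation normc := (@ComplexField.Normc.normc R).

Lemma mem_expgs (A : {set gT}) (a : gT) (n : nat) : a \in A -> (a ^+ n \in A ^+ n)%g.
Proof.
move=> aA; elim: n => [|n IHn]; first by rewrite !expg0 set11.
by rewrite !expgS mem_mulg.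
Qed.

Lemma sum_mulg_le (A C : {set gT}) (f : gT -> R) (a : gT) :
  (forall y, 0 <= f y) -> a \in A ->
  \sum_(y in C) f (a * y)%g <= \sum_(y in (A * C)%g) f y.
Proof.
move=> f_ge0 aA; rewrite [in X in _ <= X](reindex_inj (mulgI a)) /=.
rewrite big_mkcond [X in _ <= X]big_mkcond /=; apply: ler_sum => y _.
case: ifP => yC; first by rewrite (mem_mulg aA yC).
by case: ifP.
Qed.

Lemma normc_hat1 (B : {set gT}) (z : gT -> R[i]) :
  normc (hat1 B z) = PG R B * normc (mean B z).
Proof.
have normc_nat n : normc n%:R = n%:R.
  by rewrite -[n%:R]/((1 : R[i]) *+ n) normcMn ComplexField.Normc.normc1.
rewrite /hat1 /mean /PG -big_mkcond; have [B0|B_gt0] := posnP #|B|.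
  rewrite (eq_bigl _ _ (card0_eq B0)) big_pred0_eq B0.
  by rewrite !(mul0r, mulr0, ComplexField.Normc.normc0).
have G_gt0 := cardG_gt0 [set: gT].
rewrite !ComplexField.Normc.normcM !ComplexField.Normc.normcV !normc_nat.
by field; rewrite !pnatr_eq0 -!lt0n B_gt0.
Qed.

Lemma normc_Lin_sub1 (g : gT -> R[i]) (a b : gT) :
  is_Lin g -> normc (g (a * b^-1)%g - 1) = normc (g a - g b).
Proof.
move=> [gM g1]; have -> : g a - g b = (g (a * b^-1)%g - 1) * g b.
  by rewrite mulrBl mul1r -gM mulgKV.
by rewrite ComplexField.Normc.normcM g1 mulr1.
Qed.

Lemma LSpec_mean_ge (B : {set gT}) (eps : R) (g : gT -> R[i]) :
  LSpec B eps g -> (0 < #|B|)%N -> Num.sqrt (1 - eps ^+ 2 / 2) <= normc (mean B g).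
Proof.
move=> [_ spec] B_gt0.
have G_gt0 := cardG_gt0 [set: gT].
have PG_gt0 : 0 < PG R B by rewrite /PG divr_gt0 // ltr0n.
by rewrite -(ler_pM2r PG_gt0) [X in _ <= X]mulrC -normc_hat1.
Qed.

Lemma LSpec_variance_le (B : {set gT}) (eps : R) (g : gT -> R[i]) :
  LSpec B eps g -> (0 < #|B|)%N ->
  \sum_(y in B) normc (g y - mean B g) ^+ 2 <= #|B|%:R * (eps ^+ 2 / 2).
Proof.
move=> spec B_gt0; have [[_ g1] _] := spec.
have mean_ge := LSpec_mean_ge spec B_gt0.
have sqr_mean_ge : 1 - eps ^+ 2 / 2 <= normc (mean B g) ^+ 2.
  have [x_ge0|x_lt0] := leP 0 (1 - eps ^+ 2 / 2).
    by rewrite -(sqr_sqrtr x_ge0) ler_sqr ?nnegrE ?sqrtr_ge0 ?normc_ge0.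
  exact: le_trans (ltW x_lt0) (sqr_ge0 _).
rewrite sum_sqr_normc_sub_mean // (eq_bigr (fun=> 1)) => [|y _]; last by rewrite g1 expr1n.
have N_gt0 : 0 < #|B|%:R :> R by rewrite ltr0n.
rewrite sumr_const; nra.
Qed.

Lemma Lin_translate_sqr_le (g : gT -> R[i]) (A C : {set gT}) (m : R[i]) (a b : gT) :
  is_Lin g -> a \in A -> b \in A ->
  #|C|%:R * normc (g a - g b) ^+ 2 <= 4 * \sum_(y in (A * C)%g) normc (g y - m) ^+ 2.
Proof.
move=> [gM g1] aA bA; pose f y := normc (g y - m) ^+ 2.
have f_ge0 y : 0 <= f y by exact: sqr_ge0.
have shift y : normc (g a - g b) ^+ 2 <= 2 * (f (a * y)%g + f (b * y)%g).
  have -> : normc (g a - g b) = normc (g (a * y)%g - g (b * y)%g).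
    by rewrite !gM -mulrBl ComplexField.Normc.normcM g1 mulr1.
  exact: sqr_normc_sub_le.
rewrite [_%:R * _]mulr_natl -sumr_const.
apply: le_trans (ler_sum _ (fun y _ => shift y)) _.
rewrite -mulr_sumr big_split /=.
have := sum_mulg_le C f_ge0 aA; have := sum_mulg_le C f_ge0 bA; rewrite /f; lra.
Qed.

Lemma LSpec_Lin_sub_le (A C : {set gT}) (K eps : R) (g : gT -> R[i]) (a b : gT) :
  0 <= eps -> LSpec (A * C)%g eps g -> (0 < #|C|)%N -> #|(A * C)%g|%:R <= K * #|C|%:R ->
  a \in A -> b \in A -> normc (g a - g b) <= eps * Num.sqrt (2 * K).
Proof.
move=> eps_ge0 spec C_gt0 doubling aA bA; have M_gt0 : 0 < #|C|%:R :> R by rewrite ltr0n.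
have [y yC] := card_gt0P C_gt0.
have AC_gt0 : (0 < #|(A * C)%g|)%N by apply/card_gt0P; exists (a * y)%g; exact: mem_mulg.
have N_gt0 : 0 < #|(A * C)%g|%:R :> R by rewrite ltr0n.
have K_ge0 : 0 <= 2 * K by nra.
have translate := Lin_translate_sqr_le C (mean (A * C)%g g) spec.1 aA bA.
have variance := LSpec_variance_le spec AC_gt0.
rewrite -ler_sqr ?nnegrE ?normc_ge0 ?mulr_ge0 ?sqrtr_ge0 // exprMn sqr_sqrtr //.
rewrite -(ler_pM2l M_gt0); nra.
Qed.
End Characters.

Theorem proposition8p1 (R : realType) (gT : finGroupType) (A : {set gT})
  (K : R) (l : nat) (eps : R) :
  0 < K -> (0 < l)%N ->
  PG R (A ^+ l)%g <= K * PG R (A ^+ l.-1)%g ->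
  0 < eps <= 1 ->
  forall x : gT, x \in (A * A^-1)%g ->
    LinBohr (LSpec (A ^+ l)%g eps) (2 * eps * Num.sqrt (2 * K)) x.
Proof.
move=> _ l_gt0 doubling /andP[eps_gt0 _] x /mulsgP[a b' aA b'A ->] g spec.
have bA : (b'^-1)%g \in A by rewrite -mem_invg.
rewrite -[b']invgK; set C := (A ^+ l.-1)%g.
have AlE : (A ^+ l = A * C)%g by rewrite /C; case: (l) l_gt0 => // n _; rewrite expgS.
rewrite AlE in doubling spec.
have C_gt0 : (0 < #|C|)%N by apply/card_gt0P; exists (a ^+ l.-1)%g; exact: mem_expgs.
have card_le : #|(A * C)%g|%:R <= K * #|C|%:R :> R.
  have G_gt0 : 0 < #|[set: gT]|%:R :> R by rewrite ltr0n cardG_gt0.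
  by move: doubling; rewrite /PG mulrA ler_pM2r // invr_gt0.
have sub_le := LSpec_Lin_sub_le (ltW eps_gt0) spec C_gt0 card_le aA bA.
apply: le_trans (circ_norm_le (spec.1.2 _)) _.
rewrite normc_Lin_sub1 -?mulrA; last exact: spec.1.
have := sqrtr_ge0 (2 * K); nra.
Qed.
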